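(* Let $P=v_1v_2\cdots v_\ell$ be a path whose nodes carry bags $B_{v_j}$ such that, for every vertex, the set of nodes whose bags contain it is a contiguous subpath. Let $\{\mu_{B_{v_j}}\}$ be distributions on $B_{v_j}$-assignments whose marginals agree on intersections of bags. Let $v$ be an internal node of $P$ whose two neighbours $u,w$ on $P$ are also internal nodes of $P$ and satisfy $B_v\cap B_w\subseteq B_u$ (here $u$ may precede or follow $v$). Let $P'$ be the path obtained from $P$ by deleting $v$ and adding the edge $\{u,w\}$, and let $B(P')=\bigcup_{x\in V(P')}B_x$. Let $\mathcal A$ be the distribution of the output of SC-Round run on $P$ starting at $v_1$, and $\mathcal A'$ the distribution of the output of SC-Round run on $P'$ starting at $v_1$. Then $\mathcal A'$ equals the restriction (marginal) of $\mathcal A$ to $B(P')$.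
   Context: For a finite set $X$, an $X$-assignment is a map $X\to\{0,1\}$. SC-Round on a path starting at $v_1$: sample $f|_{B_{v_1}}$ from $\mu_{B_{v_1}}$; then for $j=2,3,\dots$ along the path, with previous node $v'$, let $B^+=B_{v_j}\cap B_{v'}$ and $B^-=B_{v_j}\setminus B^+$, and sample $f|_{B^-}$ with $\Pr[f|_{B^-}=g'] = \Pr_{g\sim\mu_{B_{v_j}}}[g|_{B^-}=g'\mid g|_{B^+}=f|_{B^+}]$. The output is the assignment $f$ on the union of all bags. *)

From mathcomp Require Import all_boot all_order all_algebra.
Set Implicit Arguments. Unset Strict Implicit. Unset Printing Implicit Defensive.
Import Order.TTheory GRing.Theory Num.Theory.
Local Open Scope ring_scope.

Section SC.
Variables (R : realFieldType) (V N : finType).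

(* A (partial) assignment: an X-assignment is an [asg] whose domain is X. *)
Definition asg := {ffun V -> option bool}.

Definition dom (f : asg) : {set V} := [set x | f x != None].

Definition restr (X : {set V}) (f : asg) : asg :=
  [ffun x => if x \in X then f x else None].

Definition marg (X : {set V}) (mu : asg -> R) (g : asg) : R :=
  \sum_(f : asg | restr X f == g) mu f.

Definition is_dist_on (X : {set V}) (mu : asg -> R) : Prop :=
  [/\ forall f, 0 <= mu f, \sum_(f : asg) mu f = 1
    & forall f, mu f != 0 -> dom f = X].

(* Pr_{g ~ mu}[ g|Bm = gm | g|Bp = fp ]  (ratio is 0 if the conditioning
   event has probability 0, which never happens with positive probability) *)
Definition condPr (mu : asg -> R) (Bp Bm : {set V}) (fp gm : asg) : R :=
  (\sum_(g : asg | (restr Bm g == gm) && (restr Bp g == fp)) mu g) /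
  (\sum_(g : asg | restr Bp g == fp) mu g).

Definition merge (h g' : asg) : asg :=
  [ffun x => if g' x is Some b then Some b else h x].

Variables (B : N -> {set V}) (mu : N -> asg -> R).

Definition scStep (A : asg -> R) (v' x : N) (f : asg) : R :=
  let Bp := B x :&: B v' in
  let Bm := B x :\: Bp in
  \sum_(h : asg) \sum_(g' : asg | dom g' == Bm)
     (if f == merge h g' then A h * condPr (mu x) Bp Bm (restr Bp h) g' else 0).

Fixpoint scRest (A : asg -> R) (prev : N) (rest : seq N) : asg -> R :=
  match rest with
  | [::] => A
  | x :: r => scRest (scStep A prev x) x r
  end.

Definition scRound (s : seq N) : asg -> R :=
  match s with
  | [::] => fun _ => 0
  | x :: r => scRest (mu x) x r
  end.

End SC.

From Pilot Require Import Defs.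
From mathcomp Require Import all_boot all_order all_algebra.
Import Order.TTheory GRing.Theory Num.Theory.
Local Open Scope ring_scope.

Set Implicit Arguments. Unset Strict Implicit. Unset Printing Implicit Defensive.

(* Three facts drive the proof.
   - Marginalising onto X commutes with every step whose bag lies in X
     ([marg_scRest]); hence a run all of whose bags lie in X is its own
     X-marginal ([scRound_margK]).
   - Order u v w: the variables introduced at v lie outside X, so the step at
     v disappears after marginalising ([marg_step_invisible]); as
     B_w ∩ B_v = B_w ∩ B_u, the step at w after v is the step at w after u.
   - Order w v u: sampling B_v \ B_w from mu_v and then B_u \ B_v from mu_u
     gives, on X, the law of sampling B_u \ B_w from mu_u directly, since
     mu_u, mu_v agree on B_u ∩ B_v and B_v ∩ B_w = B_u ∩ B_w
     ([collapse_steps]).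
   [scRound_drop_middle] reduces the theorem to such a local identity between
   two consecutive steps; Section Path checks it for both orders using the
   running-intersection property, and lemma3p7 combines the two cases. *)

(* [Defs.merge] is shadowed by the sorting function [path.merge]. *)
Local Notation mrg := Defs.merge.

Section Assignments.
Variable V : finType.
Implicit Types (X Y : {set V}) (f g h : asg V).

Lemma restrE X f x : restr X f x = if x \in X then f x else None.
Proof. by rewrite ffunE. Qed.

Lemma mergeE h g x : mrg h g x = if g x is Some b then Some b else h x.
Proof. by rewrite ffunE. Qed.

Lemma in_dom f x : (x \in dom f) = (f x != None).
Proof. by rewrite inE. Qed.

Lemma dom_restr X f : dom (restr X f) = X :&: dom f.
Proof. by apply/setP => x; rewrite !inE ffunE; case: (x \in X). Qed.

Lemma eq_asgE f g : (f == g) = [forall x, f x == g x].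
Proof. by apply/eqP/forallP => [-> //| H]; apply/ffunP => x; apply/eqP. Qed.

Lemma eq_domE f X : (dom f == X) = [forall x, (f x != None) == (x \in X)].
Proof.
apply/idP/idP => [/eqP <-|/forallP H]; first by apply/forallP => x; rewrite in_dom.
by apply/eqP/setP => x; rewrite in_dom; exact: (eqP (H x)).
Qed.

Lemma restr_restr X Y h : Y \subset X -> restr Y (restr X h) = restr Y h.
Proof. by move=> /subsetP sYX; apply/ffunP => x; rewrite !restrE; case: ifP => // /sYX ->. Qed.

Lemma restr_id X f : dom f \subset X -> restr X f = f.
Proof.
move=> /subsetP sfX; apply/ffunP => x; rewrite restrE.
by case: ifP => // xX; case E: (f x) => //; have := sfX x; rewrite in_dom E xX => /(_ isT).
Qed.

Lemma restr_merge X h g : dom g \subset X -> restr X (mrg h g) = mrg (restr X h) g.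
Proof.
move=> /subsetP sgX; apply/ffunP => x; rewrite !restrE !mergeE restrE.
by case: ifP => // xX; case E: (g x) => //; have := sgX x; rewrite in_dom E xX => /(_ isT).
Qed.

Lemma restr_merge_disj X h g :
  (forall y, y \in dom g -> y \notin X) -> restr X (mrg h g) = restr X h.
Proof.
move=> gX; apply/ffunP => x; rewrite !restrE mergeE.
by case: ifP => // xX; case E: (g x) => //; have := gX x; rewrite in_dom E xX => /(_ isT).
Qed.

End Assignments.

Lemma forall_andb (T : finType) (P Q : pred T) :
  [forall x, P x] && [forall x, Q x] = [forall x, P x && Q x].
Proof.
apply/andP/forallP => [[/forallP H1 /forallP H2] x|H]; first by rewrite H1 H2.
by split; apply/forallP => x; case/andP: (H x).
Qed.

Section Sums.
Variable R : realFieldType.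

Lemma if_mul (b : bool) (a z : R) : (if b then a else 0) * z = if b then a * z else 0.
Proof. by case: b; rewrite ?mul0r. Qed.

Lemma mul_if1 (b : bool) (z : R) : z * (if b then 1 else 0) = if b then z else 0.
Proof. by case: b; rewrite ?mulr1 ?mulr0. Qed.

Lemma sum_if_eq (I : finType) (P : pred I) (m : I) (F : I -> R) :
  \sum_(i | P i) (if i == m then F i else 0) = if P m then F m else 0.
Proof.
case Pm: (P m).
  by rewrite (bigD1 m) //= eqxx big1 ?addr0 // => i /andP[_ /negbTE ->].
by rewrite big1 // => i Pi; case: eqP => // ei; rewrite -ei Pi in Pm.
Qed.

Lemma sum_if_eq' (I : finType) (P : pred I) (m : I) (F : I -> R) :
  \sum_(i | P i) (if m == i then F i else 0) = if P m then F m else 0.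
Proof. by rewrite -sum_if_eq; apply: eq_bigr => i _; rewrite eq_sym. Qed.

Lemma eq_bigl_nz (I : finType) (F : I -> R) (P Q : pred I) :
  (forall i, F i != 0 -> P i = Q i) ->
  \sum_(i | P i) F i = \sum_(i | Q i) F i.
Proof.
move=> PQ; rewrite big_mkcond [RHS]big_mkcond; apply: eq_bigr => i _.
by have [->|/PQ ->] := eqVneq (F i) 0; [case: (P i); case: (Q i)|].
Qed.

End Sums.

Section Steps.
Variables (R : realFieldType) (V N : finType).
Variables (B : N -> {set V}) (mu : N -> asg V -> R).
Implicit Types (X : {set V}) (f g h : asg V) (A : asg V -> R).

(* The conditional law of the fresh values at x (previous node p), given the
   values h already sampled on the shared part B x ∩ B p. *)
Local Notation cond x p h g :=
  (condPr (mu x) (B x :&: B p) (B x :\: (B x :&: B p)) (restr (B x :&: B p) h) g).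

Lemma sum_scStep A p x (Phi : asg V -> R) :
  \sum_f scStep B mu A p x f * Phi f =
  \sum_h A h * \sum_(g | dom g == B x :\: (B x :&: B p)) cond x p h g * Phi (mrg h g).
Proof.
rewrite /scStep; under eq_bigr do rewrite mulr_suml.
rewrite exchange_big /=; apply: eq_bigr => h _.
under eq_bigr do rewrite mulr_suml.
rewrite exchange_big /= mulr_sumr; apply: eq_bigr => g _.
by under eq_bigr do rewrite if_mul; rewrite sum_if_eq mulrA.
Qed.

Lemma marg_sum X (F : asg V -> R) G :
  marg X F G = \sum_f F f * (if restr X f == G then 1 else 0).
Proof. by rewrite /marg big_mkcond; apply: eq_bigr => f _; rewrite mul_if1. Qed.

Lemma eval_sum (F : asg V -> R) G : F G = \sum_f F f * (if f == G then 1 else 0).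
Proof. by under eq_bigr do rewrite mul_if1; rewrite sum_if_eq. Qed.

Lemma scStep_ext A A' p x : A =1 A' -> scStep B mu A p x =1 scStep B mu A' p x.
Proof. by move=> AA' f; apply: eq_bigr => h _; rewrite AA'. Qed.

Lemma scRest_ext A A' p s : A =1 A' -> scRest B mu A p s =1 scRest B mu A' p s.
Proof. by elim: s A A' p => //= x s IH A A' p AA'; apply/IH/scStep_ext. Qed.

Lemma scRest_cat A p s t :
  scRest B mu A p (s ++ t) = scRest B mu (scRest B mu A p s) (last p s) t.
Proof. by elim: s A p => //= y s IH A p; rewrite IH. Qed.

Lemma marg_scStep X A p x : B x \subset X ->
  marg X (scStep B mu A p x) =1 scStep B mu (marg X A) p x.
Proof.
move=> sxX G; rewrite marg_sum sum_scStep [RHS]eval_sum sum_scStep.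
under [RHS]eq_bigr do rewrite /marg mulr_suml.
rewrite (partition_big (fun h => restr X h) xpredT) //=.
apply: eq_bigr => j _; apply: eq_bigr => h /eqP <-; congr (_ * _).
apply: eq_bigr => g /eqP dg; rewrite restr_restr ?restr_merge //.
- by rewrite dg subDset subsetU // sxX orbT.
- by rewrite (subset_trans (subsetIl _ _) sxX).
Qed.

Lemma marg_scRest X s A p : (forall y, y \in s -> B y \subset X) ->
  marg X (scRest B mu A p s) =1 scRest B mu (marg X A) p s.
Proof.
elim: s A p => //= y s IH A p sX G.
rewrite IH => [|z zs]; last by apply: sX; rewrite inE zs orbT.
by apply/scRest_ext/marg_scStep/sX; rewrite inE eqxx.
Qed.

Lemma marg_dist X x : is_dist_on (B x) (mu x) -> B x \subset X ->
  marg X (mu x) =1 mu x.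
Proof.
move=> [_ _ dom_mu] sxX G; rewrite /marg (@eq_bigl_nz _ _ _ _ (pred1 G)).
  exact: big_pred1_eq.
by move=> f /dom_mu df; rewrite /= restr_id // df.
Qed.

Lemma scRound_margK X x0 s :
  (forall y, y \in x0 :: s -> B y \subset X) -> is_dist_on (B x0) (mu x0) ->
  scRound B mu (x0 :: s) =1 marg X (scRound B mu (x0 :: s)).
Proof.
move=> sX dist0 G /=; rewrite marg_scRest => [|y ys]; last by apply: sX; rewrite inE ys orbT.
by apply/esym/scRest_ext/marg_dist/sX; rewrite // inE eqxx.
Qed.

(* After the step at p, every assignment of positive weight restricts on B p
   to an assignment of positive mu_p-probability; this keeps the conditional
   probabilities of the next step well defined. *)
Definition supported p A := forall h, A h != 0 -> mu p (restr (B p) h) != 0.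

Lemma supported_scStep A p x : is_dist_on (B x) (mu x) -> supported x (scStep B mu A p x).
Proof.
move=> [_ _ dom_mu] f; apply: contraNN => /eqP mu0.
rewrite /scStep; apply/eqP; rewrite big1 // => h _; rewrite big1 // => g' /eqP dg'.
case: eqP => // ef; rewrite /condPr big1 ?mul0r ?mulr0 // => g /andP[/eqP eM /eqP eP].
have [//|/dom_mu dg] := eqVneq (mu x g) 0.
suff restr_g : restr (B x) f = g by rewrite restr_g in mu0.
apply/ffunP => y; rewrite ef restrE mergeE.
move: (congr1 (fun k : asg V => k y) eM) (congr1 (fun k : asg V => k y) eP)
  (congr1 (fun S : {set V} => y \in S) dg) (congr1 (fun S : {set V} => y \in S) dg').
rewrite !restrE !in_dom !inE.
by case: (y \in B x); case: (y \in B p); case: (g y) => [[]|]; case: (h y) => [[]|];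
  case: (g' y) => [[]|].
Qed.

Lemma condPr_sum1 x (Bp : {set V}) (fp : asg V) :
  is_dist_on (B x) (mu x) -> Bp \subset B x -> marg Bp (mu x) fp != 0 ->
  \sum_(g' | dom g' == B x :\: Bp) condPr (mu x) Bp (B x :\: Bp) fp g' = 1.
Proof.
move=> [_ _ dom_mu] sBp; rewrite /condPr /marg -mulr_suml => nz.
suff -> : \sum_(g' | dom g' == B x :\: Bp)
     \sum_(g | (restr (B x :\: Bp) g == g') && (restr Bp g == fp)) mu x g =
   \sum_(g | restr Bp g == fp) mu x g by rewrite divff.
under eq_bigr do rewrite big_mkcondl.
rewrite exchange_big /=; apply: eq_bigr => g _; rewrite sum_if_eq'.
have [->|/dom_mu dg] := eqVneq (mu x g) 0; first by case: ifP.
by rewrite dom_restr dg (setIidPl (subsetDl _ _)) eqxx.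
Qed.

Lemma marg_ge X (F : asg V -> R) G f0 :
  (forall f, 0 <= F f) -> restr X f0 == G -> F f0 <= marg X F G.
Proof. by move=> F0 e; rewrite /marg (bigD1 f0) //= lerDl sumr_ge0. Qed.

(* A step at v after u whose fresh variables B v \ B u all lie outside X is
   invisible in the X-marginal: it only samples values that are forgotten. *)
Lemma marg_step_invisible X A u v :
  is_dist_on (B v) (mu v) -> (forall f, 0 <= mu u f) ->
  (forall G, marg (B v :&: B u) (mu v) G = marg (B v :&: B u) (mu u) G) ->
  supported u A -> (forall y, y \in B v -> y \notin B u -> y \notin X) ->
  marg X (scStep B mu A u v) =1 marg X A.
Proof.
move=> dist_v mu_u0 cons suppA fresh_out G.
rewrite marg_sum sum_scStep [RHS]marg_sum; apply: eq_bigr => h _.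
have [->|Ah] := eqVneq (A h) 0; first by rewrite !mul0r.
congr (_ * _).
have forget g : dom g == B v :\: B v :&: B u -> restr X (mrg h g) = restr X h.
  move=> /eqP dg; apply: restr_merge_disj => y; rewrite dg !inE => /andP[yvu yv].
  by apply: fresh_out; rewrite // -(andTb (y \in B u)) -yv.
under eq_bigr => g dg do rewrite (forget g dg).
rewrite -mulr_suml condPr_sum1 ?mul1r ?subsetIl // cons; apply: lt0r_neq0.
have restr_uv : restr (B v :&: B u) (restr (B u) h) == restr (B v :&: B u) h.
  by rewrite restr_restr // subsetIr.
by apply: (lt_le_trans _ (marg_ge mu_u0 restr_uv)); rewrite lt0r mu_u0 andbT suppA.
Qed.

Lemma scRound_drop_middle X x0 (a b : seq N) (p q r : N) :
  is_dist_on (B x0) (mu x0) -> is_dist_on (B p) (mu p) ->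
  (forall y, y \in x0 :: a ++ p :: r :: b -> B y \subset X) ->
  (forall A, supported p A ->
     marg X (scStep B mu (scStep B mu A p q) q r) =1 marg X (scStep B mu A p r)) ->
  scRound B mu (x0 :: a ++ p :: r :: b) =1
  marg X (scRound B mu (x0 :: a ++ [:: p; q; r] ++ b)).
Proof.
move=> dist0 dist_p sX local G; rewrite (scRound_margK sX) //= !scRest_cat /=.
have sbX y : y \in b -> B y \subset X.
  by move=> yb; apply: sX; rewrite inE mem_cat !inE yb !orbT.
rewrite !marg_scRest //; apply: scRest_ext => f.
by rewrite local //; apply: supported_scStep.
Qed.

End Steps.

Ltac optcase y :=
  repeat match goal with |- context [?g y] => case: (g y) => [[]|] end.

(* Order w v u: the steps at v (after w) and u (after v) collapse into the
   single step at u after w.  Write S = B v ∩ B w (= B u ∩ B w), T = B u ∩ B v;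
   the two steps sample g1 on M1 = B v \ S and g2 on M2 = B u \ T, the direct
   step samples g3 on M3 = B u \ S.  The pair (g1|T, g2) corresponds to g3. *)
Section Collapse.
Variables (R : realFieldType) (V N : finType).
Variables (B : N -> {set V}) (mu : N -> asg V -> R).
Variables (u v w : N) (X : {set V}).
Local Notation S := (B v :&: B w).
Local Notation T := (B u :&: B v).
Local Notation M1 := (B v :\: S).
Local Notation M2 := (B u :\: T).
Local Notation M3 := (B u :\: S).
Hypothesis S_sub_u : S \subset B u.
(* Running intersection: a vertex of B v \ B w that is still visible in X
   must reappear in B u. *)
Hypothesis visible_in_u : forall y, y \in B v -> y \notin B w -> y \in X -> y \in B u.

Lemma S_sub_u_at y : (y \in B v) && (y \in B w) ==> (y \in B u).
Proof. by apply/implyP => yS; apply: (subsetP S_sub_u); rewrite inE. Qed.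

Lemma visible_in_u_at y :
  (y \in B v) ==> ((y \notin B w) ==> ((y \in X) ==> (y \in B u))).
Proof. by do 3!apply/implyP => ?; apply: visible_in_u. Qed.

Ltac memcase y :=
  move: (S_sub_u_at y) (visible_in_u_at y); rewrite ?(restrE, mergeE, inE);
  case: (y \in B u); case: (y \in B v); case: (y \in B w); case: (y \in X);
  optcase y.

Lemma dom_at (g : asg V) (M : {set V}) y : dom g = M -> (g y != None) = (y \in M).
Proof. by move=> <-; rewrite in_dom. Qed.

Lemma two_steps_on_X (h g1 g2 : asg V) : dom g1 = M1 -> dom g2 = M2 ->
  restr X (mrg (mrg h g1) g2) = restr X (mrg h (mrg (restr T g1) g2)).
Proof. by move=> d1 d2; apply/ffunP => y; move: (dom_at y d1) (dom_at y d2); memcase y. Qed.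

Lemma restr_T_merge (h g1 : asg V) : restr T (mrg h g1) = restr T (mrg h (restr T g1)).
Proof. by apply/ffunP => y; memcase y. Qed.

Lemma combine_T (g1 g2 : asg V) : dom g2 = M2 -> restr T (mrg (restr T g1) g2) = restr T g1.
Proof. by move=> d2; apply/ffunP => y; move: (dom_at y d2); memcase y. Qed.

Lemma combine_M2 (g1 g2 : asg V) : dom g1 = M1 -> dom g2 = M2 ->
  restr M2 (mrg (restr T g1) g2) = g2.
Proof. by move=> d1 d2; apply/ffunP => y; move: (dom_at y d1) (dom_at y d2); memcase y. Qed.

Lemma combine_dom (g1 g2 : asg V) : dom g1 = M1 -> dom g2 = M2 ->
  dom (mrg (restr T g1) g2) == M3.
Proof.
move=> d1 d2; rewrite eq_domE; apply/forallP => y.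
by move: (dom_at y d1) (dom_at y d2); memcase y.
Qed.

Lemma combineP (g1 g2 g3 : asg V) : dom g1 = M1 -> dom g2 = M2 -> dom g3 = M3 ->
  (g2 == restr M2 g3) && (restr T g3 == restr T g1) = (g3 == mrg (restr T g1) g2).
Proof.
move=> d1 d2 d3; rewrite !eq_asgE !forall_andb; apply: eq_forallb => y.
by move: (dom_at y d1) (dom_at y d2) (dom_at y d3); memcase y.
Qed.

Lemma dom_restr_M2 (g3 : asg V) : dom g3 = M3 -> dom (restr M2 g3) == M2.
Proof. by move=> d3; rewrite eq_domE; apply/forallP => y; move: (dom_at y d3); memcase y. Qed.

(* Given g1, the map g2 |-> (g1|T, g2) is a bijection onto the M3-assignments
   that agree with g1 on T. *)
Lemma sum_combine (g1 : asg V) (F : asg V -> R) : dom g1 = M1 ->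
  \sum_(g2 | dom g2 == M2) F (mrg (restr T g1) g2) =
  \sum_(g3 | dom g3 == M3) (if restr T g3 == restr T g1 then F g3 else 0).
Proof.
move=> d1.
transitivity (\sum_(g3 | dom g3 == M3) \sum_(g2 | dom g2 == M2)
   (if g2 == restr M2 g3 then (if restr T g3 == restr T g1 then F g3 else 0) else 0));
  last by apply: eq_bigr => g3 /eqP d3; rewrite sum_if_eq dom_restr_M2.
rewrite exchange_big /=; apply: eq_bigr => g2 /eqP d2.
transitivity (\sum_(g3 | dom g3 == M3) (if g3 == mrg (restr T g1) g2 then F g3 else 0)).
  by rewrite sum_if_eq combine_dom.
apply: eq_bigr => g3 /eqP d3; rewrite -(combineP d1 d2 d3).
by case: (g2 == restr M2 g3); case: (restr T g3 == restr T g1).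
Qed.

Hypothesis dom_mu_v : forall f, mu v f != 0 -> dom f = B v.
Hypothesis mu_u_ge0 : forall f, 0 <= mu u f.
Hypothesis consT : forall G, marg T (mu v) G = marg T (mu u) G.
Hypothesis consS : forall G, marg S (mu v) G = marg S (mu u) G.

Lemma first_step_event (h g g3 : asg V) : dom g = B v -> dom g3 = M3 ->
  (restr S g == restr S h) && (restr T (restr M1 g) == restr T g3) =
  (restr T g == restr T (mrg h (restr T g3))).
Proof.
move=> dg d3; rewrite !eq_asgE !forall_andb; apply: eq_forallb => y.
by move: (dom_at y dg) (dom_at y d3); memcase y.
Qed.

Lemma second_step_event (h g g3 : asg V) : dom g3 = M3 ->
  (restr M2 g == restr M2 g3) && (restr T g == restr T (mrg h (restr T g3))) =
  (restr M3 g == g3) && (restr S g == restr S h).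
Proof.
move=> d3; rewrite !eq_asgE !forall_andb; apply: eq_forallb => y.
by move: (dom_at y d3); memcase y.
Qed.

(* The probability that the step at v produces the T-values of g3. *)
Lemma first_step_prob (h g3 : asg V) : dom g3 = M3 ->
  \sum_(g1 | dom g1 == M1)
     (if restr T g1 == restr T g3 then condPr (mu v) S M1 (restr S h) g1 else 0) =
  marg T (mu v) (restr T (mrg h (restr T g3))) / marg S (mu v) (restr S h).
Proof.
move=> d3; rewrite /condPr /marg.
under eq_bigr do rewrite -if_mul.
rewrite -mulr_suml; congr (_ / _).
transitivity (\sum_(g1 | dom g1 == M1) \sum_(g | restr S g == restr S h)
   (if restr M1 g == g1 then (if restr T g1 == restr T g3 then mu v g else 0) else 0)).
  apply: eq_bigr => g1 _; rewrite big_mkcondl /=; case: ifP => _.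
    by apply: eq_bigr => g _; case: ifP.
  by rewrite big1 // => g _; case: ifP.
rewrite exchange_big /=; under eq_bigr => g _ do rewrite sum_if_eq'.
rewrite [LHS]big_mkcond [RHS]big_mkcond; apply: eq_bigr => g _.
have [->|/dom_mu_v dg] := eqVneq (mu v g) 0; first by repeat case: ifP.
rewrite dom_restr dg (setIidPl (subsetDl _ _)) eqxx -(first_step_event h dg d3).
by case: (restr S g == restr S h); case: (restr T (restr M1 g) == restr T g3).
Qed.

(* Chain rule: P[g3|T] * P[g3|M2 given g3|T] = P[g3], all conditioned on h|S. *)
Lemma chain_rule (h g3 : asg V) : dom g3 = M3 ->
  condPr (mu u) T M2 (restr T (mrg h (restr T g3))) (restr M2 g3) *
  \sum_(g1 | dom g1 == M1)
     (if restr T g1 == restr T g3 then condPr (mu v) S M1 (restr S h) g1 else 0) =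
  condPr (mu u) S M3 (restr S h) g3.
Proof.
move=> d3; rewrite first_step_prob // consT consS.
set r := restr T (mrg h (restr T g3)).
rewrite /condPr; under eq_bigl => g do rewrite (second_step_event h g d3).
rewrite -/(marg T (mu u) r) -/(marg S (mu u) (restr S h)).
set num := \sum_(g | _) mu u g.
have [margT0|margTn0] := eqVneq (marg T (mu u) r) 0; last by rewrite mulrA divfK.
suff -> : num = 0 by rewrite margT0 !mul0r.
apply/eqP; rewrite eq_le sumr_ge0 // andbT -margT0 /marg /num.
under eq_bigl => g do rewrite -(second_step_event h g d3).
by rewrite big_mkcondl /=; apply: ler_sum => g _; case: ifP.
Qed.

Hypothesis S_eq : B u :&: B w = B v :&: B w.

Lemma collapse_steps (A : asg V -> R) :
  marg X (scStep B mu (scStep B mu A w v) v u) =1 marg X (scStep B mu A w u).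
Proof.
move=> G; rewrite marg_sum sum_scStep sum_scStep [RHS]marg_sum sum_scStep S_eq.
apply: eq_bigr => h _; congr (_ * _).
pose F g3 := condPr (mu u) T M2 (restr T (mrg h (restr T g3))) (restr M2 g3) *
   (if restr X (mrg h g3) == G then 1 else 0).
transitivity (\sum_(g1 | dom g1 == M1) condPr (mu v) S M1 (restr S h) g1 *
   \sum_(g3 | dom g3 == M3) (if restr T g3 == restr T g1 then F g3 else 0)).
  apply: eq_bigr => g1 /eqP d1; congr (_ * _); rewrite -sum_combine //.
  apply: eq_bigr => g2 /eqP d2.
  by rewrite /F combine_T // combine_M2 // -restr_T_merge two_steps_on_X.
under eq_bigr do rewrite mulr_sumr.
rewrite exchange_big /=; apply: eq_bigr => g3 /eqP d3.
transitivity (F g3 * \sum_(g1 | dom g1 == M1)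
     (if restr T g1 == restr T g3 then condPr (mu v) S M1 (restr S h) g1 else 0)).
  rewrite mulr_sumr; apply: eq_bigr => g1 _; rewrite eq_sym.
  by case: ifP; rewrite ?mulr0 // mulrC.
by rewrite /F mulrAC chain_rule.
Qed.

End Collapse.

Section RunningIntersection.
Variables (V N : finType) (B : N -> {set V}).

Lemma rem_middle (a t : seq N) (p q : N) : q \notin a -> p != q ->
  rem q (a ++ p :: q :: t) = a ++ p :: t.
Proof.
elim: a => [|y a IH] /=; first by move=> _ /negbTE ->; rewrite eqxx.
by rewrite inE negb_or eq_sym => /andP[/negbTE -> qa] pq; rewrite IH.
Qed.

Lemma nth_cat_add (d : N) (a s : seq N) i : nth d (a ++ s) (size a + i) = nth d s i.
Proof. by rewrite nth_cat ltnNge leq_addr /= addKn. Qed.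

Lemma running_intersection_triple (a b : seq N) (p q r d : N) :
  let P := a ++ [:: p; q; r] ++ b in
  (forall (x : V) (i j k : nat), (i <= j <= k)%N -> (k < size P)%N ->
     x \in B (nth d P i) -> x \in B (nth d P k) -> x \in B (nth d P j)) ->
  [/\ forall y z, z \in a -> y \in B z -> y \in B q -> y \in B p,
      forall y z, z \in b -> y \in B z -> y \in B q -> y \in B r &
      forall y, y \in B p -> y \in B r -> y \in B q].
Proof.
move=> P ri; have sizeP : size P = (size a + (3 + size b))%N by rewrite !size_cat.
have nth_p : nth d P (size a + 0) = p by rewrite nth_cat_add.
have nth_q : nth d P (size a + 1) = q by rewrite nth_cat_add.
have nth_r : nth d P (size a + 2) = r by rewrite nth_cat_add.
split.
- move=> y z za yz yq.
  have nth_z : nth d P (index z a) = z by rewrite nth_cat index_mem za nth_index.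
  rewrite -nth_p; apply: (ri y (index z a) _ (size a + 1)%N).
  + by rewrite addn0 (ltnW (_ : index z a < size a)%N) ?index_mem // leq_addr.
  + by rewrite sizeP ltn_add2l.
  + by rewrite nth_z.
  + by rewrite nth_q.
- move=> y z zb yz yq.
  have nth_z : nth d P (size a + (3 + index z b)) = z.
    by rewrite nth_cat_add (nth_cat_add d [:: p; q; r]) nth_index.
  rewrite -nth_r; apply: (ri y (size a + 1)%N _ (size a + (3 + index z b))).
  + by rewrite !leq_add2l /= leq_addr.
  + by rewrite sizeP ltn_add2l ltn_add2l index_mem.
  + by rewrite nth_q.
  + by rewrite nth_z.
- move=> y yp yr; rewrite -nth_q; apply: (ri y (size a + 0)%N _ (size a + 2)%N).
  + by rewrite !leq_add2l.
  + by rewrite sizeP ltn_add2l.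
  + by rewrite nth_p.
  + by rewrite nth_r.
Qed.

End RunningIntersection.

Section Path.
Variables (R : realFieldType) (V N : finType).
Variables (B : N -> {set V}) (mu : N -> asg V -> R).
Variables (x0 : N) (a b : seq N) (p q r d : N).
Local Notation P := (x0 :: a ++ [:: p; q; r] ++ b).
Local Notation P' := (x0 :: a ++ p :: r :: b).
Local Notation X := (\bigcup_(x <- P') B x).
Hypothesis P_uniq : uniq P.
Hypothesis P_ri : forall (x : V) (i j k : nat), (i <= j <= k)%N -> (k < size P)%N ->
  x \in B (nth d P i) -> x \in B (nth d P k) -> x \in B (nth d P j).
Hypothesis P_dist : forall x, x \in P -> is_dist_on (B x) (mu x).
Hypothesis P_cons : forall x y, x \in P -> y \in P -> forall g,
  marg (B x :&: B y) (mu x) g = marg (B x :&: B y) (mu y) g.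

Lemma rem_q : rem q P = P'.
Proof.
move: P_uniq; rewrite -cat_cons cat_uniq => /and3P[_ not_q_a /= /andP[]].
rewrite inE negb_or => /andP[pq _] _.
have q_notin : q \notin x0 :: a.
  by apply/negP => qa; move/negP: not_q_a; apply; apply/hasP; exists q; rewrite // !inE eqxx orbT.
exact: (rem_middle (r :: b) q_notin pq).
Qed.

Lemma P'_sub_X y : y \in P' -> B y \subset X.
Proof. by move=> yP; rewrite bigcup_seq; apply: bigcup_sup. Qed.

Lemma X_covered y : y \in X -> exists2 z, z \in P' & y \in B z.
Proof. by rewrite bigcup_seq => /bigcupP[z zP yz]; exists z. Qed.

Lemma in_P x : x \in [:: p; q; r] -> x \in P.
Proof. by move=> xm; rewrite -cat_cons mem_cat mem_cat xm orbT. Qed.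

Let ri := running_intersection_triple (B := B) (a := x0 :: a) P_ri.

Lemma visible_q y : y \in B q -> y \in X -> (y \in B p) || (y \in B r).
Proof.
case: ri => before after _ yq /X_covered[z]; rewrite -cat_cons mem_cat.
case/orP => [za yz|]; first by rewrite (before y z za yz yq).
by rewrite !inE => /or3P[/eqP->|/eqP->|zb] yz; rewrite ?yz ?orbT // (after y z zb yz yq) orbT.
Qed.

Lemma dist_x0 : is_dist_on (B x0) (mu x0).
Proof. by apply: P_dist; rewrite inE eqxx. Qed.

(* Order u v w, i.e. p = u, q = v, r = w. *)
Lemma drop_middle_forward :
  B q :&: B r \subset B p -> scRound B mu P' =1 marg X (scRound B mu P).
Proof.
move=> qr_sub_p.
have pP : p \in P by apply: in_P; rewrite inE eqxx.
have qP : q \in P by apply: in_P; rewrite !inE eqxx orbT.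
apply: scRound_drop_middle => [||y|A suppA G]; [exact: dist_x0|exact: P_dist|exact: P'_sub_X|].
have rX : B r \subset X by apply: P'_sub_X; rewrite inE mem_cat !inE eqxx !orbT.
have fresh_out y : y \in B q -> y \notin B p -> y \notin X.
  move=> yq yp; apply/negP => /(visible_q yq); rewrite (negbTE yp) /= => yr.
  by move/negP: yp; apply; apply: (subsetP qr_sub_p); rewrite inE yq.
have [mu_p0 _ _] := P_dist pP.
have shared : B r :&: B q = B r :&: B p.
  case: ri => _ _ middle; apply/setP => y; rewrite !inE.
  apply/andP/andP => [[yr yq]|[yr yp]]; split; rewrite ?(middle y) //.
  by apply: (subsetP qr_sub_p); rewrite inE yq.
have v_invisible := marg_step_invisible (P_dist qP) mu_p0 (P_cons qP pP) suppA fresh_out.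
by rewrite !marg_scStep // (scStep_ext B mu q r v_invisible) /scStep shared.
Qed.

(* Order w v u, i.e. p = w, q = v, r = u. *)
Lemma drop_middle_backward :
  B q :&: B p \subset B r -> scRound B mu P' =1 marg X (scRound B mu P).
Proof.
move=> qp_sub_r.
have pP : p \in P by apply: in_P; rewrite inE eqxx.
have qP : q \in P by apply: in_P; rewrite !inE eqxx orbT.
have rP : r \in P by apply: in_P; rewrite !inE eqxx !orbT.
apply: scRound_drop_middle => [||y|A _]; [exact: dist_x0|exact: P_dist|exact: P'_sub_X|].
have visible_in_r y : y \in B q -> y \notin B p -> y \in X -> y \in B r.
  by move=> yq /negbTE yp /(visible_q yq); rewrite yp.
have shared : B r :&: B p = B q :&: B p.
  case: ri => _ _ middle; apply/setP => y; rewrite !inE.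
  apply/andP/andP => [[yr yp]|[yq yp]]; split; rewrite ?(middle y) //.
  by apply: (subsetP qp_sub_r); rewrite inE yq.
have [_ _ dom_mu_q] := P_dist qP.
have [mu_r0 _ _] := P_dist rP.
apply: (collapse_steps qp_sub_r visible_in_r dom_mu_q mu_r0 _ _ shared) => G.
  by rewrite setIC P_cons.
by rewrite (P_cons qP pP) -shared P_cons.
Qed.

End Path.

Unset Implicit Arguments. Set Strict Implicit. Set Printing Implicit Defensive.

Theorem lemma3p7 (R : realFieldType) (V N : finType)
  (B : N -> {set V}) (mu : N -> asg V -> R)
  (P : seq N) (a b : seq N) (u v w : N) :
  uniq P ->
  (* running-intersection: nodes containing a vertex form a contiguous subpath *)
  (forall (x : V) (i j k : nat), (i <= j <= k)%N -> (k < size P)%N ->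
     x \in B (nth v P i) -> x \in B (nth v P k) -> x \in B (nth v P j)) ->
  (forall x, x \in P -> is_dist_on (B x) (mu x)) ->
  (forall x y, x \in P -> y \in P -> forall g,
     marg (B x :&: B y) (mu x) g = marg (B x :&: B y) (mu y) g) ->
  (P = a ++ [:: u; v; w] ++ b \/ P = a ++ [:: w; v; u] ++ b) ->
  a != [::] -> b != [::] ->
  B v :&: B w \subset B u ->
  forall g : asg V,
    scRound B mu (rem v P) g =
    marg (\bigcup_(x <- rem v P) B x) (scRound B mu P) g.
Proof.
move=> P_uniq P_ri P_dist P_cons shape a_nonempty _ vw_sub_u g.
case: a a_nonempty shape => // x0 a _; rewrite !cat_cons.
case=> P_eq; subst P; rewrite (rem_q P_uniq).
- exact: (drop_middle_forward P_ri P_dist P_cons vw_sub_u).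
- exact: (drop_middle_backward P_ri P_dist P_cons vw_sub_u).
Qed.
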